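(* Let $E$ be a set of equivariance equations (equations $t\approx s$ between nominal terms) of total size $n$ and let $\nabla$ be a freshness context of size $m$. Then the algorithm $\mathfrak E$, run on $E;\nabla;\mathrm{Atoms}(E);\mathit{Id}$ until no rule applies, has $O(n^2+m)$ time complexity, assuming permutations are represented by a pair of hash tables (for the permutation and its inverse) and membership in the atom set and in $\nabla$ by hash tables, all with constant-time lookup and update.
   Context: Nominal terms $t::=f(t_1,\dots,t_n)\mid a\mid a.t\mid \pi\cdot X$ over sorted atoms, variables and function symbols; $\pi$ is a permutation (finite sequence of swappings $(a\,b)$ of same-sorted atoms; $\mathit{Id}$ the empty one); $\pi\bullet t$ is the swapping action ($(a\,b)$ exchanges $a,b$ everywhere, $(a\,b)\bullet(\pi\cdot X)=((a\,b)\pi)\cdot X$, sequences act right to left). The size of a term is the number of occurrences of atoms, variables and function symbols in it (the size of $E$ is the sum over its equations); $\mathrm{Atoms}(E)$ is the set of atoms occurring in $E$. A freshness context is a finite set of constraints $a\# X$. Algorithm $\mathfrak E$ works on states $E;\nabla;A;\pi$ with rules ($\uplus$ disjoint union): Dec-E: $\{f(t_1,..,t_m)\approx f(s_1,..,s_m)\}\uplus E;\nabla;A;\mathit{Id}\Rightarrow\{t_1\approx s_1,..,t_m\approx s_m\}\cup E;\nabla;A;\mathit{Id}$. Alp-E: $\{a.t\approx b.s\}\uplus E;\nabla;A;\mathit{Id}\Rightarrow\{(\bar c\,a)\bullet t\approx(\bar c\,b)\bullet s\}\cup E;\nabla;A;\mathit{Id}$, $\bar c$ a fresh atom (not in $A$,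 not occurring so far) of the sort of $a,b$. Sus-E: $\{\pi_1\cdot X\approx\pi_2\cdot X\}\uplus E;\nabla;A;\mathit{Id}\Rightarrow\{\pi_1\bullet a\approx\pi_2\bullet a\mid a\in A,\ a\# X\notin\nabla\}\cup E;\nabla;A;\mathit{Id}$. Rem-E: $\{a\approx b\}\uplus E;\nabla;A;\pi\Rightarrow E;\nabla;A\setminus\{b\};\pi$, for atoms with $\pi\bullet a=b$. Sol-E: $\{a\approx b\}\uplus E;\nabla;A;\pi\Rightarrow E;\nabla;A\setminus\{b\};(\pi\bullet a\;\,b)\pi$, for atoms with $\pi\bullet a\in A$, $b\in A$, $\pi\bullet a\neq b$. *)

From mathcomp Require Import all_boot.
Set Implicit Arguments. Unset Strict Implicit. Unset Printing Implicit Defensive.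

(** Sorted atoms: an atom is a pair (sort, name); infinitely many atoms per sort. *)
Definition atom := (nat * nat)%type.
Definition asort (a : atom) : nat := a.1.

(** A permutation is a finite sequence of swappings; [[:: s1; ...; sk]]
    denotes s1 ∘ ... ∘ sk (acting right to left).  [Id] is [[::]]. *)
Definition perm := seq (atom * atom).

Definition swap_atom (s : atom * atom) (c : atom) : atom :=
  if c == s.1 then s.2 else if c == s.2 then s.1 else c.

Definition pact (p : perm) (c : atom) : atom := foldr swap_atom c p.

Definition is_id (p : perm) : Prop := forall c, pact p c = c.

(** variables and function symbols are named by nats *)
Inductive term : Type :=
| Fn  of nat & seq term
| At  of atom
| Abs of atom & term
| Sus of perm & nat.

Fixpoint tact (p : perm) (t : term) : term :=
  match t with
  | Fn f ts => Fn f (map (tact p) ts)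
  | At a => At (pact p a)
  | Abs a u => Abs (pact p a) (tact p u)
  | Sus q X => Sus (p ++ q) X
  end.

(** size = number of occurrences of atoms (including those in permutations),
    variables and function symbols *)
Fixpoint tsize (t : term) : nat :=
  match t with
  | Fn _ ts => 1 + sumn (map tsize ts)
  | At _ => 1
  | Abs _ u => 1 + tsize u
  | Sus q X => 2 * size q + 1
  end.

(** number of syntax-tree nodes (invariant under swapping); used as the cost
    of traversing a term *)
Fixpoint tnodes (t : term) : nat :=
  match t with
  | Fn _ ts => 1 + sumn (map tnodes ts)
  | At _ => 1
  | Abs _ u => 1 + tnodes u
  | Sus _ _ => 1
  end.

Fixpoint tatoms (t : term) : seq atom :=
  match t with
  | Fn _ ts => flatten (map tatoms ts)
  | At a => [:: a]
  | Abs a u => a :: tatoms u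
  | Sus q X => flatten (map (fun s => [:: s.1; s.2]) q)
  end.

Definition equation := (term * term)%type.
Definition eqs_size (E : seq equation) : nat := sumn (map (fun e => tsize e.1 + tsize e.2) E).
Definition eqs_atoms (E : seq equation) : seq atom :=
  flatten (map (fun e => tatoms e.1 ++ tatoms e.2) E).

(** freshness context: a list of constraints a # X *)
Definition fctx := seq (atom * nat).

(** states E ; nabla ; A ; pi  (E is handled as a multiset / worklist) *)
Record state := St { st_E : seq equation; st_nabla : fctx; st_A : seq atom; st_pi : perm }.

Definition perm_atoms (p : perm) : seq atom := flatten (map (fun s => [:: s.1; s.2]) p).

Definition state_atoms (s : state) : seq atom :=
  eqs_atoms (st_E s) ++ map fst (st_nabla s) ++ st_A s ++ perm_atoms (st_pi s).

Definition remove_atom (A : seq atom) (b : atom) : seq atom := [seq x <- A | x != b].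

(** [step used s s' k]: one rule application from [s] to [s'] costing [k]
    elementary operations in the stated cost model (permutations, the atom set
    A and nabla stored in constant-time hash tables).  [used] is the set of
    atoms that occurred so far in the run (for the freshness side condition of
    Alp-E).  Costs:
    - Dec-E : 1 + m (remove the equation, push the m new ones);
    - Alp-E : 1 + traversal of t and s (each swapping of an atom or of the
              permutation of a suspension is O(1) on the hash tables);
    - Sus-E : 1 + |A| (one O(1) lookup in nabla and two O(1) permutation
              lookups per atom of A);
    - Rem-E, Sol-E : 1 (lookups/updates in hash tables). *)
Inductive step (used : seq atom) : state -> state -> nat -> Prop :=
| DecE E1 E2 nabla A p f ts ss :
    is_id p -> size ts = size ss ->
    step used (St (E1 ++ (Fn f ts, Fn f ss) :: E2) nabla A p)
              (St (zip ts ss ++ E1 ++ E2) nabla A p) (1 + size ts)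
| AlpE E1 E2 nabla A p a b t s c :
    is_id p -> asort a = asort b -> asort c = asort a ->
    c \notin A -> c \notin used ->
    step used (St (E1 ++ (Abs a t, Abs b s) :: E2) nabla A p)
              (St ((tact [:: (c, a)] t, tact [:: (c, b)] s) :: E1 ++ E2) nabla A p)
              (1 + tnodes t + tnodes s)
| SusE E1 E2 nabla A p p1 p2 X :
    is_id p ->
    step used (St (E1 ++ (Sus p1 X, Sus p2 X) :: E2) nabla A p)
              (St ([seq (At (pact p1 a), At (pact p2 a)) | a <- A & (a, X) \notin nabla]
                   ++ E1 ++ E2) nabla A p)
              (1 + size A)
| RemE E1 E2 nabla A p a b :
    pact p a = b ->
    step used (St (E1 ++ (At a, At b) :: E2) nabla A p)
              (St (E1 ++ E2) nabla (remove_atom A b) p) 1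
| SolE E1 E2 nabla A p a b :
    pact p a \in A -> b \in A -> pact p a != b ->
    step used (St (E1 ++ (At a, At b) :: E2) nabla A p)
              (St (E1 ++ E2) nabla (remove_atom A b) ((pact p a, b) :: p)) 1.

Inductive derivation : seq atom -> state -> nat -> Prop :=
| Deriv_nil used s : derivation used s 0
| Deriv_cons used s s' k c :
    step used s s' k -> derivation (used ++ state_atoms s') s' c ->
    derivation used s (k + c).

Definition init_state (E : seq equation) (nabla : fctx) : state :=
  St E nabla (undup (eqs_atoms E)) [::].

From Pilot Require Import Defs.
From mathcomp Require Import all_boot.
From mathcomp Require Import zify.
From Stdlib Require List.

Set Implicit Arguments.
Unset Strict Implicit.
Unset Printing Implicit Defensive.

(** The cost is bounded by a potential on the list of pending equations, in
    which every term is weighted by the work the algorithm may still spend on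
    it.  As long as the atom set [A] has at most [N] elements (and rules only
    shrink [A]), every rule application lowers the potential by at least its
    cost.  The potential of a term of size [n] is [O((N + n) n)], and
    initially [N <= n]; hence every run costs [O(n^2)], plus [O(n + m)] for
    building the hash tables. *)

Definition term_nested_ind (P : term -> Prop)
    (HFn : forall f ts, List.Forall P ts -> P (Fn f ts))
    (HAt : forall a, P (At a))
    (HAbs : forall a u, P u -> P (Abs a u))
    (HSus : forall q X, P (Sus q X)) : forall t, P t :=
  fix ind t := match t return P t with
  | Fn f ts =>
      HFn f ts ((fix ind_seq us := match us return List.Forall P us with
                 | [::] => List.Forall_nil P
                 | u :: us' => @List.Forall_cons _ P u us' (ind u) (ind_seq us')
                 end) ts)
  | At a => HAt a
  | Abs a u => HAbs a u (ind u)
  | Sus q X => HSus q X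
  end.

Lemma eq_map_Forall (T U : Type) (f g : T -> U) (s : seq T) :
  List.Forall (fun x => f x = g x) s -> map f s = map g s.
Proof. by elim=> //= x s' -> _ ->. Qed.

Lemma leq_sumn_map_Forall (T : Type) (f g : T -> nat) (s : seq T) :
  List.Forall (fun x => f x <= g x) s -> sumn (map f s) <= sumn (map g s).
Proof. by elim=> //= x s' le_fg _ IH; apply: leq_add. Qed.

Lemma sumn_affine_sqr_le (T : Type) (K : nat) (f : T -> nat) (s : seq T) :
  sumn [seq (K + f x) * f x | x <- s] <= (K + sumn (map f s)) * sumn (map f s).
Proof. elim: s => //= x s IH; nia. Qed.

Lemma tnodes_gt0 t : 0 < tnodes t.
Proof. by case: t. Qed.

Lemma size_le_sumn_tnodes ts : size ts <= sumn (map tnodes ts).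
Proof. by elim: ts => //= t ts IH; have := tnodes_gt0 t; lia. Qed.

Lemma tnodes_tact p t : tnodes (tact p t) = tnodes t.
Proof.
elim/term_nested_ind: t => //= [f ts IH | a u ->] //.
by rewrite -map_comp (eq_map_Forall IH).
Qed.

Lemma tnodes_le_tsize t : tnodes t <= Defs.tsize t.
Proof.
elim/term_nested_ind: t => [f ts IH | a | a u IH | q X] /=; try lia.
by rewrite leq_add2l; apply: leq_sumn_map_Forall.
Qed.

Lemma size_tatoms_le_tsize t : size (tatoms t) <= Defs.tsize t.
Proof.
elim/term_nested_ind: t => [f ts IH | a | a u IH | q X] /=; [ | by [] | lia | ].
- rewrite size_flatten /shape -map_comp add1n ltnW // ltnS.
  exact: leq_sumn_map_Forall.
- rewrite size_flatten /shape -map_comp.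
  by elim: q => //= s q; lia.
Qed.

Lemma size_init_atoms E : size (undup (eqs_atoms E)) <= eqs_size E.
Proof.
apply: leq_trans (size_undup _) _.
elim: E => //= e E IH; rewrite /eqs_atoms /= !size_cat -/(eqs_atoms E).
by rewrite /eqs_size /= -/(eqs_size E) !leq_add ?size_tatoms_le_tsize.
Qed.

Section Potential.

Variable N : nat.

(* Each node pays for the rule that will consume it: [Fn] for Dec-E (which
   pushes one equation per argument), [Abs] for Alp-E (which traverses the
   body), and a suspension for Sus-E, whose cost [1 + |A|] and the at most
   [|A|] atom equations of weight [2] it creates are covered by [2 N + 2]
   when [|A| <= N]. *)
Fixpoint weight (t : term) : nat :=
  match t with
  | Fn _ ts => 1 + size ts + sumn (map weight ts)
  | At _ => 1
  | Abs _ u => 1 + tnodes u + weight u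
  | Sus _ _ => 2 * N + 2
  end.

Definition eqn_weight (e : equation) : nat := weight e.1 + weight e.2.

Definition potential (E : seq equation) : nat := sumn (map eqn_weight E).

Lemma weight_tact p t : weight (tact p t) = weight t.
Proof.
elim/term_nested_ind: t => //= [f ts IH | a u ->]; last by rewrite tnodes_tact.
by rewrite size_map -map_comp (eq_map_Forall IH).
Qed.

Lemma weight_le t : weight t <= (2 * N + 3 + tnodes t) * tnodes t.
Proof.
elim/term_nested_ind: t => /= [f ts IH | a | a u IH | q X]; try nia.
have le_sum := leq_trans (leq_sumn_map_Forall IH) (sumn_affine_sqr_le _ _ _).
have := size_le_sumn_tnodes ts; nia.
Qed.

Lemma potential_cat E1 E2 : potential (E1 ++ E2) = potential E1 + potential E2.
Proof. by rewrite /potential map_cat sumn_cat. Qed.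

Lemma potential_cons e E : potential (e :: E) = eqn_weight e + potential E.
Proof. by []. Qed.

Lemma potential_zip ts ss : size ts = size ss ->
  potential (zip ts ss) = sumn (map weight ts) + sumn (map weight ss).
Proof.
elim: ts ss => [|t ts IH] [|s ss] //= [/IH].
by rewrite potential_cons => ->; rewrite /eqn_weight /=; lia.
Qed.

Lemma potential_atom_eqns (L : seq atom) (f g : atom -> atom) :
  potential [seq (At (f a), At (g a)) | a <- L] = 2 * size L.
Proof. by elim: L => //= a L; by rewrite potential_cons => ->; rewrite /eqn_weight /=; lia. Qed.

Lemma potential_le E : potential E <= (2 * N + 3 + eqs_size E) * eqs_size E.
Proof.
pose nodes (e : equation) := tnodes e.1 + tnodes e.2.
have le_nodes : sumn (map nodes E) <= eqs_size E.
  by apply: leq_sumn_map_Forall; apply/List.Forall_forall => e _;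
     rewrite leq_add ?tnodes_le_tsize.
have le_pot : potential E <= (2 * N + 3 + sumn (map nodes E)) * sumn (map nodes E).
  apply: leq_trans (sumn_affine_sqr_le _ _ _); apply: leq_sumn_map_Forall.
  apply/List.Forall_forall => e _; rewrite /eqn_weight /nodes.
  by have := weight_le e.1; have := weight_le e.2; nia.
by apply: leq_trans le_pot _; rewrite leq_mul ?leq_add2l.
Qed.

Lemma step_size_A used s s' k : step used s s' k -> size (st_A s') <= size (st_A s).
Proof. by case=> //= *; rewrite size_filter count_size. Qed.

Lemma step_potential used s s' k : step used s s' k -> size (st_A s) <= N ->
  k + potential (st_E s') <= potential (st_E s).
Proof.
case=> /= {s s' k}.
- move=> E1 E2 nabla A p f ts ss _ size_ts _.
  by rewrite !potential_cat potential_cons potential_zip // /eqn_weight /=; lia.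
- move=> E1 E2 nabla A p a b t s c *.
  rewrite !potential_cons !potential_cat potential_cons /eqn_weight /=.
  by rewrite !weight_tact; lia.
- move=> E1 E2 nabla A p p1 p2 X _ size_A.
  rewrite !potential_cat potential_cons potential_atom_eqns size_filter /eqn_weight /=.
  by set kept := count _ A; have : kept <= size A := count_size _ _; lia.
- by move=> *; rewrite !potential_cat potential_cons /eqn_weight /=; lia.
- by move=> *; rewrite !potential_cat potential_cons /eqn_weight /=; lia.
Qed.

Lemma derivation_cost_le used s c : derivation used s c ->
  size (st_A s) <= N -> c <= potential (st_E s).
Proof.
elim=> {used s c} // used s s' k c st _ IH size_A.
have := step_potential st size_A.
have := IH (leq_trans (step_size_A st) size_A); lia.
Qed.

End Potential.

Theorem theorem8 :
  exists C : nat, forall (E : seq equation) (nabla : fctx) (c : nat),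
    derivation (state_atoms (init_state E nabla)) (init_state E nabla) c ->
    eqs_size E + size nabla + c <= C * ((eqs_size E) ^ 2 + size nabla + 1).
Proof.
exists 7 => E nabla c run.
have := derivation_cost_le run (size_init_atoms E).
have := potential_le (eqs_size E) E.
rewrite /init_state /=; nia.
Qed.
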